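(* For every integer $n\ge 3$, the disjunctive domination number of the torus grid graph $C_3\Box C_n$ is $$\gamma_2^d(C_3\Box C_n)=\left\lceil \frac{n}{2}\right\rceil.$$
   Context: $C_k$ denotes the cycle on $k$ vertices, and $G\Box H$ is the Cartesian product: vertex set $V(G)\times V(H)$, with $(g,h)\sim(g',h')$ iff either $g=g'$ and $hh'\in E(H)$, or $h=h'$ and $gg'\in E(G)$. For a simple graph $\Gamma$ and a vertex $v$, let $\Gamma(v)$ be the set of vertices at distance $1$ from $v$ and $\Gamma_2(v)$ the set of vertices at distance exactly $2$ from $v$. A set $S\subseteq V(\Gamma)$ is a disjunctive dominating set if every vertex $v\notin S$ satisfies $|\Gamma(v)\cap S|\ge 1$ or $|\Gamma_2(v)\cap S|\ge 2$. The disjunctive domination number $\gamma_2^d(\Gamma)$ is the minimum cardinality of a disjunctive dominating set of $\Gamma$. *)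

From mathcomp Require Import all_boot all_order.
Set Implicit Arguments. Unset Strict Implicit. Unset Printing Implicit Defensive.

(* A simple graph on a finite type T is given by a symmetric irreflexive
   boolean relation e. *)

(* Cycle C_k on vertex set 'I_k: i ~ j iff j = i+1 mod k or i = j+1 mod k,
   and i <> j (irreflexive; relevant only for degenerate k). *)
Definition cycle_adj (k : nat) : rel 'I_k :=
  fun i j => (i != j) && ((j == (i.+1 %% k) :> nat) || (i == (j.+1 %% k) :> nat)).

Definition cart_adj (T U : finType) (g : rel T) (h : rel U) : rel (T * U) :=
  fun x y => ((x.1 == y.1) && h x.2 y.2) || ((x.2 == y.2) && g x.1 y.1).

Definition nbhd (T : finType) (e : rel T) (v : T) : {set T} :=
  [set u | e v u].

Definition nbhd2 (T : finType) (e : rel T) (v : T) : {set T} :=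
  [set u | (u != v) && ~~ e v u && [exists w, e v w && e w u]].

Definition disj_dominating (T : finType) (e : rel T) (S : {set T}) : bool :=
  [forall v, (v \notin S) ==>
     ((0 < #|nbhd e v :&: S|) || (2 <= #|nbhd2 e v :&: S|))].

(* Minimum cardinality of a disjunctive dominating set (setT is always one). *)
Definition disj_dom_number (T : finType) (e : rel T) : nat :=
  \big[minn/#|T|]_(S : {set T} | disj_dominating e S) #|S|.


Definition torus_3n (n : nat) : rel ('I_3 * 'I_n) :=
  cart_adj (@cycle_adj 3) (@cycle_adj n).
Arguments torus_3n : clear implicits.

From mathcomp Require Import all_boot all_order zify.
Import Order.TTheory.

Set Implicit Arguments. Unset Strict Implicit. Unset Printing Implicit Defensive.

(* Upper bound: the vertices of row 0 lying in even columns form a disjunctive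
   dominating set of size ⌈n/2⌉.
   Lower bound: if column j contains w_j vertices of S, it suffices to show
   Σ_j (2 w_j - 1) >= 0.  Whether a vertex of column j is dominated depends only
   on the columns j-2, ..., j+2, and a potential [credit] on four consecutive
   columns satisfies credit(j+1) + 1 <= credit(j) + 2 w_(j+2) across every
   admissible five-column window; summing around the cycle, the credits cancel.
   The local inequality is a finite check over the 8^5 windows. *)

Lemma disj_dom_number_le (T : finType) (e : rel T) (S : {set T}) :
  disj_dominating e S -> disj_dom_number e <= #|S|.
Proof.
by move=> dS; have := bigmin_le_cond #|T| (fun S : {set T} => #|S|) dS; rewrite minEnat.
Qed.

Lemma disj_dom_number_ge (T : finType) (e : rel T) m : m <= #|T| ->
  (forall S, disj_dominating e S -> m <= #|S|) -> m <= disj_dom_number e.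
Proof.
move=> m_le_T m_le_S.
have := @le_bigmin _ nat _ (index_enum _) (fun S : {set T} => #|S|) #|T| m.
by rewrite minEnat; apply.
Qed.

Lemma nat_of_ordS n (j : 'I_n) : ordS j = (if j.+1 == n then 0 else j.+1) :> nat.
Proof.
rewrite /=; case: eqP => [->|ne]; first by rewrite modnn.
by rewrite modn_small // ltn_neqAle (introN eqP ne) ltn_ord.
Qed.

Lemma nat_of_ord_pred_gt0 n (j : 'I_n) : 0 < j -> ord_pred j = j.-1 :> nat.
Proof.
move=> j_gt0; rewrite /= -subn1 -addnBAC // modnDr subn1 modn_small //.
exact: leq_ltn_trans (leq_pred _) (ltn_ord j).
Qed.

Lemma ordS_neq n (j : 'I_n) : 1 < n -> ordS j != j.
Proof.
by move=> n_gt1; apply/eqP => /(congr1 (@nat_of_ord n)); rewrite nat_of_ordS; case: eqP; lia.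
Qed.

Lemma ord_pred_neq n (j : 'I_n) : 1 < n -> ord_pred j != j.
Proof. by move=> n_gt1; rewrite -{2}(ord_predK j) eq_sym ordS_neq. Qed.

Lemma even_ordS n (j : 'I_n) : odd j -> ~~ odd (ordS j).
Proof. by rewrite nat_of_ordS; case: eqP => //= _ ->. Qed.

Lemma even_ord_pred n (j : 'I_n) : odd j -> ~~ odd (ord_pred j).
Proof.
move=> odd_j; have j_gt0 : 0 < j by case: (nat_of_ord j) odd_j.
by rewrite nat_of_ord_pred_gt0 //; move: j_gt0 odd_j; case: (nat_of_ord j) => //= i _ /negPn.
Qed.

Lemma sum_ordS n (F : 'I_n -> nat) : \sum_(j < n) F (ordS j) = \sum_(j < n) F j.
Proof. by rewrite [RHS](reindex_inj (@ordS_inj n)). Qed.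

Lemma cyclic_potential_bound n (f g : 'I_n -> nat) :
  (forall j, f (ordS j) + 1 <= f j + g j) -> n <= \sum_(j < n) g j.
Proof.
move=> step.
have : \sum_(j < n) (f (ordS j) + 1) <= \sum_(j < n) (f j + g j) by apply: leq_sum => j _.
by rewrite !big_split /= sum_ordS leq_add2l sum1_card card_ord.
Qed.

Lemma sum_even_ord n : \sum_(j < n) ~~ odd j = uphalf n.
Proof.
elim: n => [|n IH]; first by rewrite big_ord0.
rewrite big_ord_recr /= IH !uphalf_half /=.
by case: (odd n); rewrite /= ?addn0 ?add0n ?addn1 ?uphalf_half.
Qed.

Lemma cycle_adjE n (i j : 'I_n) : 1 < n ->
  cycle_adj i j = (j == ordS i) || (j == ord_pred i).
Proof.
move=> n_gt1; have succ_i : (val j == i.+1 %% n) = (j == ordS i) by [].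
have pred_i : (val i == j.+1 %% n) = (j == ord_pred i).
  by rewrite -(can2_eq (@ordSK n) (@ord_predK n)) eq_sym.
rewrite /cycle_adj succ_i pred_i; case: (eqVneq i j) => [<- | _] //=.
by rewrite ![i == _]eq_sym (negbTE (ordS_neq i n_gt1)) (negbTE (ord_pred_neq i n_gt1)).
Qed.

Lemma cycle_adj3 (x y : 'I_3) : cycle_adj x y = (x != y).
Proof. by case: x => [[|[|[|//]]] ?]; case: y => [[|[|[|//]]] ?]. Qed.

Lemma torus_3nE n (a b : 'I_3) (i j : 'I_n) : 1 < n ->
  torus_3n n (a, i) (b, j) =
  ((a == b) && ((j == ordS i) || (j == ord_pred i))) || ((i == j) && (a != b)).
Proof. by move=> n_gt1; rewrite /torus_3n /cart_adj cycle_adjE // cycle_adj3. Qed.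

Lemma torus_3n_nbhd2_diag n (a b : 'I_3) (j l : 'I_n) : 1 < n -> a != b ->
  (l == ordS j) || (l == ord_pred j) -> (b, l) \in nbhd2 (torus_3n n) (a, j).
Proof.
move=> n_gt1 a_ne_b l_next; have l_ne_j : j != l.
  by case/orP: l_next => /eqP ->; rewrite eq_sym ?ordS_neq ?ord_pred_neq.
rewrite inE xpair_eqE eq_sym (negbTE a_ne_b) torus_3nE // (negbTE a_ne_b) (negbTE l_ne_j) /=.
by apply/existsP; exists (b, j); rewrite !torus_3nE // a_ne_b l_next !eqxx ?orbT.
Qed.

(* [enum 'I_n] does not reduce under [vm_compute] (it goes through [insub]),
   so the finite check below runs over these explicit enumerations. *)
Definition rows : seq 'I_3 := [:: @Ordinal 3 0 isT; @Ordinal 3 1 isT; @Ordinal 3 2 isT].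

Definition offsets : seq 'I_5 :=
  [:: @Ordinal 5 0 isT; @Ordinal 5 1 isT; @Ordinal 5 2 isT; @Ordinal 5 3 isT; @Ordinal 5 4 isT].

Lemma enum_ordE n (s : seq 'I_n) : map val s = iota 0 n -> enum 'I_n = s.
Proof. by rewrite -val_enum_ord => /(inj_map val_inj). Qed.

Lemma enum_rows : enum 'I_3 = rows. Proof. exact: enum_ordE. Qed.

Lemma enum_offsets : enum 'I_5 = offsets. Proof. exact: enum_ordE. Qed.

Definition window_points : seq ('I_3 * 'I_5) := [seq (b, k) | b <- rows, k <- offsets].

Lemma mem_window_points u : u \in window_points.
Proof. by case: u => b k; apply: allpairs_f; rewrite -?enum_rows -?enum_offsets mem_enum. Qed.

(* Offset k of the window around column j stands for column j + k - 2.  For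
   n <= 4 distinct offsets may name the same column; local domination is then
   only an over-approximation, which is all the lower bound needs. *)
Definition window_col n (j : 'I_n) (k : 'I_5) : 'I_n :=
  nth j [:: ord_pred (ord_pred j); ord_pred j; j; ordS j; ordS (ordS j)] k.

Definition window_vertex n (j : 'I_n) (u : 'I_3 * 'I_5) : 'I_3 * 'I_n :=
  (u.1, window_col j u.2).

Definition window_dist (a : 'I_3) (u : 'I_3 * 'I_5) : nat :=
  (u.2 - 2) + (2 - u.2) + (u.1 != a).

Definition locally_dominated (w : 'I_3 * 'I_5 -> bool) (a : 'I_3) : bool :=
  has (fun u => (window_dist a u <= 1) && w u) window_points
  || (1 < count (fun u => (window_dist a u == 2) && w u) window_points).

Section TorusWindow.
Variables (n : nat) (n_gt1 : 1 < n) (a : 'I_3) (j : 'I_n).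

Lemma closed_nbhd_in_window x : (x == (a, j)) || torus_3n n (a, j) x ->
  exists2 u, window_dist a u <= 1 & x = window_vertex j u.
Proof.
case: x => b l; rewrite torus_3nE // xpair_eqE.
case/or3P => [/andP [/eqP -> /eqP ->] | /andP [/eqP <- /orP [] /eqP ->] | /andP [/eqP <- b_ne_a]].
- by exists (a, @Ordinal 5 2 isT); rewrite /window_dist ?eqxx.
- by exists (a, @Ordinal 5 3 isT); rewrite /window_dist ?eqxx.
- by exists (a, @Ordinal 5 1 isT); rewrite /window_dist ?eqxx.
- by exists (b, @Ordinal 5 2 isT); rewrite // /window_dist /= eq_sym b_ne_a.
Qed.

Lemma nbhd2_in_window x : x \in nbhd2 (torus_3n n) (a, j) ->
  exists2 u, window_dist a u = 2 & x = window_vertex j u.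
Proof.
case: x => c l; rewrite inE => /andP [/andP [x_ne_v x_nadj] /existsP [[b k]]].
rewrite !torus_3nE // => /andP [vw wx]; move: vw wx x_ne_v x_nadj.
case/orP => [/andP [/eqP <- /orP [] /eqP ->] | /andP [/eqP <- b_ne_a]];
  case/orP => [/andP [/eqP <- /orP [] /eqP ->] | /andP [/eqP <- c_ne_b]] x_ne_v x_nadj.
- by exists (a, @Ordinal 5 4 isT); rewrite // /window_dist eqxx.
- by rewrite ordSK eqxx in x_ne_v.
- by exists (c, @Ordinal 5 3 isT); rewrite // /window_dist /= eq_sym c_ne_b.
- by rewrite ord_predK eqxx in x_ne_v.
- by exists (a, @Ordinal 5 0 isT); rewrite // /window_dist eqxx.
- by exists (c, @Ordinal 5 1 isT); rewrite // /window_dist /= eq_sym c_ne_b.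
- by exists (b, @Ordinal 5 3 isT); rewrite // /window_dist /= eq_sym b_ne_a.
- by exists (b, @Ordinal 5 1 isT); rewrite // /window_dist /= eq_sym b_ne_a.
- case: (eqVneq c a) => [c_a | c_ne_a]; first by rewrite c_a eqxx in x_ne_v.
  by rewrite torus_3nE // eqxx eq_sym c_ne_a orbT in x_nadj.
Qed.

Lemma disj_dominating_locally_dominated (S : {set 'I_3 * 'I_n}) :
  disj_dominating (torus_3n n) S -> locally_dominated (fun u => window_vertex j u \in S) a.
Proof.
move=> /forallP /(_ (a, j)) dom_v; apply/orP.
have [v_in_S | v_notin_S] := boolP ((a, j) \in S).
  left; apply/hasP; exists (a, @Ordinal 5 2 isT); first exact: mem_window_points.
  by rewrite /window_dist eqxx.
case/orP: (implyP dom_v v_notin_S) => [/card_gt0P [x] | two_far].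
  rewrite !inE => /andP [v_adj_x x_in_S]; left.
  have := @closed_nbhd_in_window x; rewrite v_adj_x orbT => /(_ isT) [u u_near x_eq].
  by apply/hasP; exists u; rewrite ?mem_window_points // u_near -x_eq.
right; apply: (leq_trans two_far).
pose far := [seq u <- window_points | (window_dist a u == 2) && (window_vertex j u \in S)].
apply: (@leq_trans #|map (window_vertex j) far|).
  apply/subset_leq_card/subsetP => x; rewrite in_setI.
  case/andP => /nbhd2_in_window [u u_far ->] x_in_S.
  by apply: map_f; rewrite mem_filter u_far eqxx x_in_S mem_window_points.
by rewrite (leq_trans (card_size _)) ?size_map ?size_filter.
Qed.

End TorusWindow.

Definition column := (bool * bool * bool)%type.

Definition columns : seq column :=
  [:: (false, false, false); (true, false, false); (false, true, false); (true, true, false);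
      (false, false, true); (true, false, true); (false, true, true); (true, true, true)].

Lemma mem_columns c : c \in columns.
Proof. by case: c => [[[] []] []]. Qed.

Definition in_col (c : column) (a : 'I_3) : bool := nth false [:: c.1.1; c.1.2; c.2] a.

Definition weight (c : column) : nat := count (in_col c) rows.

Definition in_window (cs : seq column) (u : 'I_3 * 'I_5) : bool :=
  in_col (nth (false, false, false) cs u.2) u.1.

Definition admissible (cs : seq column) : bool := all (locally_dominated (in_window cs)) rows.

Definition bonus (p c : column) : nat := (1 < weight c) || (0 < weight p).

(* Read off from the shortest-path potential of the transfer graph whose edges
   are the admissible windows, weighted by 2 w - 1 of the incoming column. *)
Definition credit (c0 c1 c2 c3 : column) : nat :=
  if 0 < weight c3 then 2 + bonus c2 c3
  else if 0 < weight c2 then 1 + bonus c1 c2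
  else if 0 < weight c1 then bonus c0 c1
  else 0.

Lemma credit_step_all :
  all (fun c0 => all (fun c1 => all (fun c2 => all (fun c3 => all (fun c4 =>
    admissible [:: c0; c1; c2; c3; c4] ==>
    (credit c1 c2 c3 c4 + 1 <= credit c0 c1 c2 c3 + 2 * weight c4))
  columns) columns) columns) columns) columns.
Proof. by vm_compute. Qed.

Lemma credit_step c0 c1 c2 c3 c4 : admissible [:: c0; c1; c2; c3; c4] ->
  credit c1 c2 c3 c4 + 1 <= credit c0 c1 c2 c3 + 2 * weight c4.
Proof.
have col := mem_columns; move: credit_step_all.
by move=> /allP /(_ _ (col c0)) /allP /(_ _ (col c1)) /allP /(_ _ (col c2))
          /allP /(_ _ (col c3)) /allP /(_ _ (col c4)) /implyP.
Qed.

Section Columns.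
Variables (n : nat) (S : {set 'I_3 * 'I_n}).

Definition col (j : 'I_n) : column :=
  let in_S k := (nth ord0 rows k, j) \in S in (in_S 0, in_S 1, in_S 2).

Lemma in_col_col j a : in_col (col j) a = ((a, j) \in S).
Proof.
case: a => [[|[|[|//]]] ?]; rewrite /in_col /col /=.
all: by congr (_ \in S); congr (_, _); apply: val_inj.
Qed.

Lemma weight_col j : weight (col j) = \sum_(a < 3) ((a, j) \in S).
Proof.
rewrite /weight (eq_count (in_col_col j)) -sum1_count big_mkcond -enum_rows /=.
by rewrite big_enum; apply: eq_bigr => a _; case: ((a, j) \in S).
Qed.

Lemma sum_weight_col : \sum_(j < n) weight (col j) = #|S|.
Proof.
rewrite (eq_bigr _ (fun j _ => weight_col j)) exchange_big pair_bigA /=.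
by rewrite -sum1_card [RHS]big_mkcond; apply: eq_bigr => -[a j] _; case: ((a, j) \in S).
Qed.

Definition window (j : 'I_n) : seq column := [seq col (window_col j k) | k <- offsets].

Lemma in_window_window j u : in_window (window j) u = (window_vertex j u \in S).
Proof.
rewrite /in_window (nth_map ord0) ?size_map // -enum_offsets nth_ord_enum.
by rewrite in_col_col.
Qed.

Lemma admissible_window j : 1 < n -> disj_dominating (torus_3n n) S -> admissible (window j).
Proof.
move=> n_gt1 dS; apply/allP => a _.
have in_w u : in_window (window j) u = (window_vertex j u \in S) := in_window_window j u.
rewrite /locally_dominated (eq_has (fun u => congr1 (andb _) (in_w u))).
rewrite (eq_count (fun u => congr1 (andb _) (in_w u))).
exact: disj_dominating_locally_dominated.
Qed.

Lemma disj_dominating_torus_3n_card : 1 < n ->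
  disj_dominating (torus_3n n) S -> n <= 2 * #|S|.
Proof.
move=> n_gt1 dS.
pose credit_at j :=
  credit (col (ord_pred (ord_pred j))) (col (ord_pred j)) (col j) (col (ordS j)).
have -> : 2 * #|S| = \sum_(j < n) 2 * weight (col (ordS (ordS j))).
  rewrite -big_distrr -sum_weight_col; congr (2 * _); apply/esym.
  exact: etrans (sum_ordS (fun j => weight (col (ordS j)))) (sum_ordS (fun j => weight (col j))).
apply: (@cyclic_potential_bound n credit_at) => j.
by rewrite /credit_at ordSK; apply: credit_step; exact: admissible_window.
Qed.

End Columns.

Definition even_row0 n : {set 'I_3 * 'I_n} :=
  [set x : 'I_3 * 'I_n | (x.1 == ord0) && ~~ odd x.2].

Lemma in_even_row0 n (a : 'I_3) (j : 'I_n) :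
  ((a, j) \in even_row0 n) = (a == ord0) && ~~ odd j.
Proof. by rewrite inE. Qed.

Lemma card_even_row0 n : #|even_row0 n| = uphalf n.
Proof.
rewrite -sum_weight_col -sum_even_ord; apply: eq_bigr => j _.
by rewrite weight_col big_ord_recl big1 => [|a _]; rewrite in_even_row0 ?addn0.
Qed.

Lemma even_row0_dominating n : 2 < n -> disj_dominating (torus_3n n) (even_row0 n).
Proof.
move=> n_gt2; have n_gt1 : 1 < n by apply: ltnW.
apply/forallP => -[a j]; apply/implyP; rewrite in_even_row0 negb_and negbK.
have [-> /= odd_j | a_ne0 /=] := eqVneq a ord0.
  apply/orP; left; apply/card_gt0P; exists (ord0, ord_pred j).
  by rewrite in_setI inE torus_3nE // !eqxx orbT in_even_row0 even_ord_pred.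
case: (boolP (odd j)) => [odd_j _ | even_j _]; last first.
  apply/orP; left; apply/card_gt0P; exists (ord0, j).
  by rewrite in_setI inE torus_3nE // eqxx a_ne0 in_even_row0 even_j orbT.
have pred_ne_succ : ord_pred j != ordS j.
  have j_gt0 : 0 < j by case: (nat_of_ord j) odd_j.
  apply/eqP => /(congr1 (@nat_of_ord n)); rewrite nat_of_ord_pred_gt0 // nat_of_ordS.
  by case: eqP; move: j_gt0 n_gt2 (ltn_ord j); lia.
have far2 : #|[set (ord0 : 'I_3, ord_pred j); (ord0, ordS j)]| = 2.
  by rewrite cards2 xpair_eqE eqxx pred_ne_succ.
apply/orP; right; apply: leq_trans (eq_leq (esym far2)) _.
apply/subset_leq_card/subsetP => x /set2P [] ->.
all: rewrite in_setI torus_3n_nbhd2_diag ?eqxx ?orbT // in_even_row0 eqxx /=.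
- exact: even_ord_pred.
- exact: even_ordS.
Qed.

Theorem theorem2 (n : nat) : 3 <= n ->
  disj_dom_number (torus_3n n) = uphalf n.
Proof.
move=> n_ge3; apply/eqP; rewrite eqn_leq; apply/andP; split.
  by rewrite -card_even_row0; apply/disj_dom_number_le/even_row0_dominating.
apply: disj_dom_number_ge => [|S dS]; rewrite leq_uphalf_double.
  by rewrite card_prod !card_ord; lia.
by rewrite -mul2n; apply: disj_dominating_torus_3n_card dS; exact: ltnW.
Qed.
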